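(* Let $L$ be any language over alphabet $\Sigma$. The following two statements are logically equivalent. 1. $L\in\mathrm{1QFA}/Rn$. 2. There exist a 1qfa $M$ with read-only tape tracks, an advice alphabet $\Gamma$, a series $\Phi=\{|\phi_n\rangle\}_{n\in\mathbb{N}}$ of quantum advice states ($|\phi_n\rangle$ a normalized state in $\mathrm{span}\{|s\rangle\mid s\in\Gamma^n\}$), and an error bound $\varepsilon\in[0,1/2)$ satisfying $\Pr_M\big[M(\genfrac{[}{]}{0pt}{}{x}{\phi_{|x|}})=L(x)\big]\geq1-\varepsilon$ for any input $x\in\Sigma^*$.
   Context: A 1qfa is a one-way measure-many quantum finite automaton. For equal-length strings $x,y$, $\genfrac{[}{]}{0pt}{}{x}{y}$ is the two-track string with $x$ on the upper track and $y$ on the lower track. $\mathrm{1QFA}/Rn$ is the family of languages $L$ for which there exist a 1qfa $M$, $\varepsilon\in[0,1/2)$, an advice alphabet $\Gamma$ and randomized advice $\{D_n\}$ ($D_n$ a distribution on $\Gamma^n$) such that for every $n$ and $x\in\Sigma^n$, $M$ on $\genfrac{[}{]}{0pt}{}{x}{y}$ with $y\sim D_n$ outputs $L(x)$ with probability at least $1-\varepsilon$. With quantum advice $|\phi_n\rangle=\sum_{s\in\Gamma^n}\alpha_s|s\rangle$, $|\genfrac{[}{]}{0pt}{}{x}{\phi_n}\rangle=\sum_s\alpha_s|\genfrac{[}{]}{0pt}{}{x}{s}\rangle$; the 1qfa works on the space spanned by $|q\rangle|y\rangle$ ($q$ an inner state, $y\in\Gamma^n$), starts in $|q_0\rangle|\phi_n\rangle$,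 and at step $i$ applies a unitary acting on its inner state and the $i$th tape cell; since both tracks are read-only it cannot change the advice content. Measurements are on the inner-state register after each step, and $\Pr_M[M(\genfrac{[}{]}{0pt}{}{x}{\phi_{|x|}})=L(x)]$ is the total probability of outputting $L(x)$. *)

From HB Require Import structures.
From mathcomp Require Import all_boot all_order all_algebra.
From mathcomp Require Import complex.
From mathcomp Require Import reals.

Set Implicit Arguments.
Unset Strict Implicit.
Unset Printing Implicit Defensive.

Import Order.TTheory GRing.Theory Num.Theory.
Local Open Scope ring_scope.

(* Tape symbols of a 1qfa over input alphabet A: left endmarker ¢,
   right endmarker $, or an input symbol. *)
Inductive tsym (A : Type) : Type :=
  | LEnd : tsym A
  | REnd : tsym A
  | Sym : A -> tsym A.
Arguments LEnd {A}.
Arguments REnd {A}.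

Section QFA.
Variable R : realType.
Local Notation C := (R[i]).

Definition sqmod (z : C) : R := (complex.Re z) ^+ 2 + (complex.Im z) ^+ 2.

(* A measure-many one-way quantum finite automaton (Kondacs-Watrous style)
   over tape alphabet A: inner states 'I_qn, a transition matrix U_a for each
   tape symbol a (acting on column vectors of amplitudes), an initial state,
   and sets of accepting / rejecting inner states. *)
Record qfa (A : Type) := QFA {
  qn : nat;
  qU : tsym A -> 'M[C]_qn;
  q0 : 'I_qn;
  qacc : {set 'I_qn};
  qrej : {set 'I_qn}
}.

Definition unitary_mx (n : nat) (U : 'M[C]_n) : Prop :=
  U *m (map_mx (@conjc R) U)^T = 1%:M.

Definition wf_qfa (A : Type) (M : qfa A) : Prop :=
  [/\ forall a : tsym A, unitary_mx (qU M a),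
      qacc M :&: qrej M = set0 &
      q0 M \notin qacc M :|: qrej M].

Definition is_nonhalt (A : Type) (M : qfa A) (q : 'I_(qn M)) : bool :=
  (q \notin qacc M) && (q \notin qrej M).

Definition applyU (A : Type) (M : qfa A) (a : tsym A) (psi : 'I_(qn M) -> C)
  : 'I_(qn M) -> C :=
  fun q => \sum_(q' < qn M) qU M a q q' * psi q'.
Arguments applyU {A} M a psi.

(* The state is kept unnormalized (projected onto Q_non). *)
Fixpoint run (A : Type) (M : qfa A) (w : seq (tsym A)) (psi : 'I_(qn M) -> C)
  : R * R :=
  match w with
  | [::] => (0, 0)
  | a :: w' =>
      let psi' := applyU M a psi in
      let pr := @run A M w' (fun q => if is_nonhalt q then psi' q else 0) in
      (\sum_(q in qacc M) sqmod (psi' q) + pr.1,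
       \sum_(q in qrej M) sqmod (psi' q) + pr.2)
  end.

Arguments run {A} M w psi.

Definition init_state (A : Type) (M : qfa A) : 'I_(qn M) -> C :=
  fun q => if q == q0 M then 1 else 0.

Definition prob_out (A : Type) (M : qfa A) (u : seq A) (b : bool) : R :=
  let pr := run M (LEnd :: rcons (map (@Sym A) u) REnd) (@init_state A M) in
  if b then pr.1 else pr.2.

Definition track2 (S G : Type) (n : nat) (x : n.-tuple S) (y : n.-tuple G)
  : seq (S * G) := zip x y.

Definition is_distr (G : finType) (n : nat) (D : {ffun n.-tuple G -> R}) : Prop :=
  (forall s, 0 <= D s) /\ \sum_s D s = 1.

Definition is_qstate (G : finType) (n : nat) (alpha : {ffun n.-tuple G -> C})
  : Prop := \sum_s sqmod (alpha s) = 1.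

Definition tape (A : Type) (u : seq A) : seq (tsym A) :=
  LEnd :: rcons (map (@Sym A) u) REnd.

(* The state lives in the space spanned by
   |q>|y> (q an inner state, y in Y = G^n the content of the read-only advice
   track); tp y is the tape (¢ [x;y] $) seen when the advice track holds y.
   At step i (reading cell i) the unitary acts on the inner state and the
   i-th tape cell: since the tape is read-only, on |q'>|y> it acts as
   U_{cell_i(y)} on the inner state and leaves |y> unchanged. *)
Fixpoint jrun (A : Type) (Y : finType) (M : qfa A) (tp : Y -> seq (tsym A))
  (i k : nat) (psi : 'I_(qn M) -> Y -> C) : R * R :=
  match k with
  | 0 => (0, 0)
  | k'.+1 =>
      let psi' := fun q y =>
        \sum_(q' < qn M) qU M (nth REnd (tp y) i) q q' * psi q' y in
      let pr := @jrun A Y M tp i.+1 k'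
                  (fun q y => if is_nonhalt q then psi' q y else 0) in
      (\sum_(q in qacc M) \sum_y sqmod (psi' q y) + pr.1,
       \sum_(q in qrej M) \sum_y sqmod (psi' q y) + pr.2)
  end.

Arguments jrun {A Y} M tp i k psi.

(* Pr_M[ M([x; phi_n]) = b ] for the advice state |phi_n> = sum_s alpha_s |s>:
   the machine starts in |q0>|phi_n> and runs over the n+2 cells of ¢[x;.]$. *)
Definition qprob_out (S G : finType) (M : qfa (S * G)) (n : nat)
  (x : n.-tuple S) (alpha : {ffun n.-tuple G -> C}) (b : bool) : R :=
  let pr := jrun M (fun s : n.-tuple G => tape (track2 x s)) 0 n.+2
              (fun q s => if q == q0 M then alpha s else 0) in
  if b then pr.1 else pr.2.

End QFA.

(* Because the advice tracks are read-only, the unitaries never mix distinct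
   advice strings: on |q0>|phi_n> = sum_s alpha_s |q0>|s> the machine runs
   independently on every classical advice string s, and the measurement
   probabilities add up with weights |alpha_s|^2.  Hence quantum advice with
   amplitudes alpha_s is exactly as powerful as randomized advice with the
   distribution |alpha_s|^2, and conversely a distribution D is realized by the
   amplitudes sqrt (D s). *)
From HB Require Import structures.
From mathcomp Require Import all_boot all_order all_algebra.
From mathcomp Require Import complex.
From mathcomp Require Import reals ring.
Import Order.TTheory GRing.Theory Num.Theory.
Local Open Scope ring_scope.

Arguments run {R A} M w psi.
Arguments applyU {R A} M a psi.
Arguments jrun {R A Y} M tp i k psi.
Arguments init_state {R A} M q.

Section Modulus.
Variable R : realType.

Lemma sqmodM (c z : R[i]) : sqmod (c * z) = sqmod c * sqmod z.
Proof. by case: c => a b; case: z => e f; rewrite /sqmod /=; ring. Qed.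

Lemma sqmod_ge0 (z : R[i]) : 0 <= sqmod z.
Proof. by rewrite /sqmod addr_ge0 // sqr_ge0. Qed.

Lemma sqmod_sqrt (r : R) : 0 <= r -> sqmod (Complex (Num.sqrt r) 0) = r.
Proof. by move=> r_ge0; rewrite /sqmod /= expr0n addr0 sqr_sqrtr. Qed.

End Modulus.

Section Runs.
Variables (R : realType) (A : Type) (M : qfa R A).

Lemma run_scale (w : seq (tsym A)) (c : R[i]) (phi phi' : 'I_(qn M) -> R[i]) :
  (forall q, phi' q = c * phi q) ->
  run M w phi' = (sqmod c * (run M w phi).1, sqmod c * (run M w phi).2).
Proof.
elim: w phi phi' => [|a w IH] phi phi' phi'E /=; first by rewrite !mulr0.
have applyU_scale q : applyU M a phi' q = c * applyU M a phi q.
  by rewrite /applyU mulr_sumr; apply: eq_bigr => q' _; rewrite phi'E mulrCA.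
rewrite (IH (fun q => if is_nonhalt q then applyU M a phi q else 0)); last first.
  by move=> q; case: ifP => _; rewrite ?applyU_scale ?mulr0.
rewrite /= !mulrDr !mulr_sumr; congr (_ + _, _ + _); apply: eq_bigr => q _;
  by rewrite applyU_scale sqmodM.
Qed.

Lemma jrunE (Y : finType) (tp : Y -> seq (tsym A)) (k i : nat)
    (psi : 'I_(qn M) -> Y -> R[i]) :
  jrun M tp i k psi =
  (\sum_y (run M (map (nth REnd (tp y)) (iota i k)) (psi^~ y)).1,
   \sum_y (run M (map (nth REnd (tp y)) (iota i k)) (psi^~ y)).2).
Proof.
elim: k i psi => [|k IH] i psi /=; first by rewrite !big1.
by rewrite IH /= !big_split /=; congr (_ + _, _ + _); rewrite exchange_big.
Qed.

End Runs.

Lemma size_tape {A : Type} (u : seq A) : size (tape u) = (size u).+2.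
Proof. by rewrite /tape /= size_rcons size_map. Qed.

Lemma size_track2 {S G : Type} {n : nat} (x : n.-tuple S) (y : n.-tuple G) :
  size (track2 x y) = n.
Proof. by rewrite /track2 size_zip !size_tuple minnn. Qed.

Lemma qprob_outE (R : realType) (S G : finType) (M : qfa R (S * G)) (n : nat)
    (x : n.-tuple S) (alpha : {ffun n.-tuple G -> R[i]}) (b : bool) :
  qprob_out M x alpha b = \sum_y sqmod (alpha y) * prob_out M (track2 x y) b.
Proof.
rewrite /qprob_out jrunE /prob_out.
have runE y : run M (map (nth REnd (tape (track2 x y))) (iota 0 n.+2))
                   (fun q => if q == q0 M then alpha y else 0) =
    (sqmod (alpha y) * (run M (tape (track2 x y)) (init_state M)).1,
     sqmod (alpha y) * (run M (tape (track2 x y)) (init_state M)).2).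
  have <- : size (tape (track2 x y)) = n.+2 by rewrite size_tape size_track2.
  rewrite -/(mkseq _ _) mkseq_nth.
  by apply: run_scale => q; rewrite /init_state; case: ifP; rewrite ?mulr1 ?mulr0.
by case: b; apply: eq_bigr => y _;
  [exact: (congr1 fst (runE y)) | exact: (congr1 snd (runE y))].
Qed.

Section Advice.
Context {R : realType} {G : finType} {n : nat}.

Definition qadvice_of_distr (D : {ffun n.-tuple G -> R}) :
  {ffun n.-tuple G -> R[i]} := [ffun y => Complex (Num.sqrt (D y)) 0].

Definition distr_of_qadvice (alpha : {ffun n.-tuple G -> R[i]}) :
  {ffun n.-tuple G -> R} := [ffun y => sqmod (alpha y)].

Lemma sqmod_qadvice_of_distr (D : {ffun n.-tuple G -> R}) y :
  is_distr D -> sqmod (qadvice_of_distr D y) = D y.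
Proof. by case=> D_ge0 _; rewrite ffunE sqmod_sqrt. Qed.

Lemma qstate_qadvice_of_distr (D : {ffun n.-tuple G -> R}) :
  is_distr D -> is_qstate (qadvice_of_distr D).
Proof.
move=> Dd; rewrite /is_qstate.
under eq_bigr do rewrite sqmod_qadvice_of_distr //.
by case: Dd.
Qed.

Lemma distr_distr_of_qadvice (alpha : {ffun n.-tuple G -> R[i]}) :
  is_qstate alpha -> is_distr (distr_of_qadvice alpha).
Proof.
move=> alpha1; split=> [y|]; first by rewrite ffunE sqmod_ge0.
by rewrite -alpha1; apply: eq_bigr => y _; rewrite ffunE.
Qed.

End Advice.

Theorem proposition5p4 (R : realType) (Sigma : finType) (L : pred (seq Sigma)) :
  (* 1. L \in 1QFA/Rn *)
  (exists (G : finType) (M : qfa R (Sigma * G)) (eps : R)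
          (D : forall n : nat, {ffun n.-tuple G -> R}),
      [/\ wf_qfa M, 0 <= eps, eps < 1 / 2,
          forall n, is_distr (D n) &
          forall (n : nat) (x : n.-tuple Sigma),
            \sum_(y : n.-tuple G) D n y * prob_out M (track2 x y) (L x)
              >= 1 - eps])
  <->
  (* 2. quantum advice *)
  (exists (G : finType) (M : qfa R (Sigma * G)) (eps : R)
          (Phi : forall n : nat, {ffun n.-tuple G -> R[i]}),
      [/\ wf_qfa M, 0 <= eps, eps < 1 / 2,
          forall n, is_qstate (Phi n) &
          forall (n : nat) (x : n.-tuple Sigma),
            qprob_out M x (Phi n) (L x) >= 1 - eps]).
Proof.
split=> -[G [M [eps [adv [wfM eps_ge0 eps_lt HD Hx]]]]].
- exists G, M, eps, (fun n => qadvice_of_distr (adv n)).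
  split=> // [n | n x]; first exact: qstate_qadvice_of_distr.
  rewrite qprob_outE.
  by under eq_bigr do rewrite sqmod_qadvice_of_distr //; exact: Hx.
- exists G, M, eps, (fun n => distr_of_qadvice (adv n)).
  split=> // [n | n x]; first exact: distr_distr_of_qadvice.
  apply: le_trans (Hx n x) _; rewrite qprob_outE le_eqVlt; apply/orP; left.
  by apply/eqP/eq_bigr => y _; rewrite ffunE.
Qed.
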